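(* Let $d\ge3$ and $d^2-d+2\le g\le d^2-1$, and let $A\in SM_d(\mathbb C)^g$ be such that $\mathcal D_A$ is bounded. Then the convex set $\mathcal D_A(1)\subseteq\mathbb R^g$ is not self-dual, i.e. $\mathcal D_A(1)\ne\{x\in\mathbb R^g:\sum_ix_iy_i\le1\ \forall y\in\mathcal D_A(1)\}$. Consequently $\mathcal D_A$ is not self-dual: $\mathcal D_A\neq\mathcal D_A^\circ$.
   Context: $SM_d(\mathbb C)^g$ denotes $g$-tuples of self-adjoint $d\times d$ complex matrices. $\mathcal D_A=\bigcup_n\mathcal D_A(n)$ with $\mathcal D_A(n)=\{X\in SM_n(\mathbb C)^g: I-\sum_iA_i\otimes X_i\succeq0\}$, so $\mathcal D_A(1)=\{x\in\mathbb R^g:I-\sum_ix_iA_i\succeq0\}$. The free polar dual of a matrix convex set $K$ is $K^\circ=\{X\in SM^g:\sum_iY_i\otimes X_i\preceq I\ \forall Y\in K\}$. *)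

From mathcomp Require Import all_boot all_order all_algebra.
From mathcomp Require Import complex mxtens.
From mathcomp Require Import reals.
Set Implicit Arguments. Unset Strict Implicit. Unset Printing Implicit Defensive.
Import Order.TTheory GRing.Theory Num.Theory.
Local Open Scope ring_scope.

Section LMI.
Variable R : rcfType.
Local Notation C := (R[i]).

Definition adjmx m n (M : 'M[C]_(m, n)) : 'M[C]_(n, m) := (map_mx Num.conj M)^T.

Definition selfadjmx n (M : 'M[C]_n) : Prop := adjmx M = M.

Definition psdmx n (M : 'M[C]_n) : Prop :=
  selfadjmx M /\ forall v : 'cV[C]_n, 0 <= (adjmx v *m M *m v) 0 0.

Definition SMtuple g n (X : 'I_g -> 'M[C]_n) : Prop := forall i, selfadjmx (X i).

(* a graded set (free set) of g-tuples: one subset for each size n *)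
Definition freeset g := forall n : nat, ('I_g -> 'M[C]_n) -> Prop.

Definition LMIdom g d (A : 'I_g -> 'M[C]_d) : freeset g :=
  fun n X => SMtuple X /\ psdmx (1%:M - \sum_(i < g) (A i *t X i)).

Definition freebounded g (K : freeset g) : Prop :=
  exists N : nat, forall n (X : 'I_g -> 'M[C]_n), K n X ->
    forall i, psdmx (N%:R%:M - X i) /\ psdmx (N%:R%:M + X i).

Definition freepolar g (K : freeset g) : freeset g :=
  fun n X => SMtuple X /\
    forall m (Y : 'I_g -> 'M[C]_m), K m Y -> psdmx (1%:M - \sum_(i < g) (Y i *t X i)).

Definition LMIdom1 g d (A : 'I_g -> 'M[C]_d) : ('I_g -> R) -> Prop :=
  fun x => psdmx (1%:M - \sum_(i < g) ((x i)%:C%C *: A i)).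

Definition polar1 g (K : ('I_g -> R) -> Prop) : ('I_g -> R) -> Prop :=
  fun x => forall y, K y -> \sum_(i < g) x i * y i <= 1.

End LMI.

(* If D_A or D_A(1) is self-dual, then D_A(1) is the closed unit ball of R^g:
   for the classical polar this is Cauchy-Schwarz, and for the free polar one
   tests D_A = D_A° on scalar points of level 1, using that every Y in
   D_A = D_A° satisfies I - sum_i Y_i (x) Y_i >= 0.
   But for g > 2 k (d - k) + 1 the ball is no LMI domain of size d.  At the
   boundary point e_1 put S = I - A_1 and k = dim ker S.  Requiring y_1 = 0 and
   that the block of L(y) = sum_i y_i A_i between ker S and a complement vanish
   imposes 2 k (d - k) + 1 real linear conditions, so some tangent y <> 0 meets
   them.  The points (e_1 + s y) / (1 + s^2 |y|^2) of the ball force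
   v^* L(y) v = 0 for v in ker S, so by polarization L(y) kills ker S and
   factors as S G S.  Being dominated by S, it keeps e_1 + s y in D_A(1) for
   small s > 0, although that point lies outside the ball. *)

From mathcomp Require Import all_boot all_order all_algebra.
From mathcomp Require Import complex mxtens.
From mathcomp Require Import reals.
From mathcomp Require Import ring lra zify.
Import Order.TTheory GRing.Theory Num.Theory.
Local Open Scope complex_scope.
Local Open Scope ring_scope.
Set Implicit Arguments. Unset Strict Implicit. Unset Printing Implicit Defensive.

Lemma exists_nonzero_common_root (F : fieldType) g (I : finType) (f : I -> 'I_g -> F) :
  (#|I| < g)%N ->
  exists2 y : 'I_g -> F, exists j, y j != 0 & forall J, \sum_i y i * f J i = 0.
Proof.
move=> hI; pose M : 'M[F]_(g, #|I|) := \matrix_(i, j) f (enum_val j) i.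
have /rowV0Pn[v /sub_kermxP vM v0] : kermx M != 0.
  by rewrite -mxrank_eq0 mxrank_ker subn_eq0 -ltnNge (leq_ltn_trans (rank_leq_col M)).
have /rV0Pn[j vj] := v0.
exists (v 0) => [|J]; first by exists j.
have /rowP/(_ (enum_rank J)) := vM; rewrite !mxE => vMJ; rewrite -[RHS]vMJ.
by apply: eq_bigr => i _; rewrite mxE enum_rankK.
Qed.

Lemma sumsq_gt0 (F : realFieldType) g (y : 'I_g -> F) j :
  y j != 0 -> 0 < \sum_i y i ^+ 2.
Proof.
move=> yj; rewrite (bigD1 j) //= ltr_pwDl ?exprn_even_gt0 //.
by apply: sumr_ge0 => i _; apply: sqr_ge0.
Qed.

Lemma linear_le_quadratic_eq0 (F : realFieldType) (a b : F) :
  (forall s, s * a <= s ^+ 2 * b) -> a = 0.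
Proof.
move=> le_ab; set B := `|b| + 1; have B_gt0 : 0 < B by rewrite ltr_wpDl.
have tB : B^-1 * B = 1 by rewrite mulVf ?gt_eqF.
have := le_ab (a * B^-1); have : b <= B - 1 by rewrite /B addrK ler_norm.
have : 0 < B^-1 by rewrite invr_gt0.
move: B^-1 tB => t tB t_gt0 bB h.
have : (a * t) ^+ 2 * b <= (a * t) ^+ 2 * (B - 1) by rewrite ler_wpM2l ?sqr_ge0.
have : a ^+ 2 * t ^+ 2 * B = a ^+ 2 * t by rewrite -mulrA expr2 -(mulrA t) tB mulr1.
move=> e h'; have : a ^+ 2 * t ^+ 2 <= 0 by nra.
by rewrite pmulr_lle0 ?exprn_gt0 // => a2_le0; apply/eqP; rewrite -sqrf_eq0 eq_le a2_le0 sqr_ge0.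
Qed.

Lemma sum_mul_le_of_sumsq_le (F : realFieldType) g (x a : 'I_g -> F) T : 0 <= T ->
  \sum_i x i ^+ 2 <= 1 -> \sum_i a i ^+ 2 <= T ^+ 2 -> \sum_i x i * a i <= T.
Proof.
move=> T_ge0 x_le a_le; have [T0|T_neq0] := eqVneq T 0.
  have a0 i : a i = 0.
    have : a i ^+ 2 <= \sum_j a j ^+ 2.
      by rewrite (bigD1 i) //= lerDl; apply: sumr_ge0 => j _; apply: sqr_ge0.
    move: a_le; rewrite T0 expr0n /= => a_le ai_le.
    by apply/eqP; rewrite -sqrf_eq0 eq_le sqr_ge0 andbT (le_trans ai_le a_le).
  by rewrite T0 big1 // => i _; rewrite a0 mulr0.
have T_gt0 : 0 < T by rewrite lt_def T_neq0.
have amgm : (\sum_i x i * a i) *+ 2 * T <= T ^+ 2 * \sum_i x i ^+ 2 + \sum_i a i ^+ 2.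
  rewrite -sumrMnl mulr_suml mulr_sumr -big_split /=; apply: ler_sum => i _.
  by have := sqr_ge0 (T * x i - a i); nra.
rewrite -(ler_pM2r T_gt0); have := ler_wpM2l (sqr_ge0 T) x_le; rewrite mulr2n in amgm; nra.
Qed.

Definition unitv (F : pzSemiRingType) g (j : 'I_g) : 'I_g -> F := fun i => (i == j)%:R.

Lemma sum_unitvM (F : pzSemiRingType) g (j : 'I_g) (f : 'I_g -> F) :
  \sum_i unitv F j i * f i = f j.
Proof.
rewrite (bigD1 j) //= big1 ?addr0 /unitv ?eqxx ?mul1r // => i /negPf ->.
by rewrite mul0r.
Qed.

Lemma sumsq_unitv_add (F : realFieldType) g (j : 'I_g) (s : F) (y : 'I_g -> F) :
  y j = 0 -> \sum_i (unitv F j i + s * y i) ^+ 2 = 1 + s ^+ 2 * \sum_i y i ^+ 2.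
Proof.
move=> yj; rewrite (bigD1 j) //= [in RHS](bigD1 j) //= yj /unitv eqxx.
rewrite mulr0 addr0 expr1n expr0n /= add0r mulr_sumr; congr (_ + _).
by apply: eq_bigr => i /negPf ->; rewrite add0r exprMn.
Qed.

Section HermitianForms.
Variable R : rcfType.
Local Notation C := R[i].

Lemma conj_realC (x : R) : (x%:C)^* = x%:C :> C.
Proof. by apply: conj_Creal; rewrite complex_real. Qed.

Lemma adjmxK m n (M : 'M[C]_(m, n)) : adjmx (adjmx M) = M.
Proof. by apply/matrixP => i j; rewrite !mxE conjCK. Qed.

Lemma adjmxM m n p (M1 : 'M[C]_(m, n)) (M2 : 'M[C]_(n, p)) :
  adjmx (M1 *m M2) = adjmx M2 *m adjmx M1.
Proof. by rewrite /adjmx map_mxM trmx_mul. Qed.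

Lemma adjmxD m n (M1 M2 : 'M[C]_(m, n)) : adjmx (M1 + M2) = adjmx M1 + adjmx M2.
Proof. by rewrite /adjmx map_mxD linearD. Qed.

Lemma adjmxB m n (M1 M2 : 'M[C]_(m, n)) : adjmx (M1 - M2) = adjmx M1 - adjmx M2.
Proof. by rewrite /adjmx map_mxB linearB. Qed.

Lemma adjmxZ m n c (M : 'M[C]_(m, n)) : adjmx (c *: M) = c^* *: adjmx M.
Proof. by apply/matrixP => i j; rewrite !mxE rmorphM. Qed.

Lemma adjmx_sum m n I (r : seq I) (P : pred I) (F : I -> 'M[C]_(m, n)) :
  adjmx (\sum_(i <- r | P i) F i) = \sum_(i <- r | P i) adjmx (F i).
Proof. by rewrite /adjmx map_mx_sum linear_sum. Qed.

Lemma adjmx_scalar n c : adjmx (c%:M : 'M[C]_n) = c^*%:M.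
Proof. by rewrite /adjmx map_scalar_mx tr_scalar_mx. Qed.

Lemma adjmx1 n : adjmx (1%:M : 'M[C]_n) = 1%:M.
Proof. by rewrite adjmx_scalar conjC1. Qed.

Lemma adjmx_tens m n p r (M1 : 'M[C]_(m, n)) (M2 : 'M[C]_(p, r)) :
  adjmx (M1 *t M2) = adjmx M1 *t adjmx M2.
Proof. by rewrite /adjmx map_mxT trmx_tens. Qed.

Lemma selfadjmx_1sub n (M : 'M[C]_n) : selfadjmx M -> selfadjmx (1%:M - M).
Proof. by move=> Msa; rewrite /selfadjmx adjmxB adjmx1 Msa. Qed.

Lemma selfadjmx_lincomb g n (x : 'I_g -> R) (Y : 'I_g -> 'M[C]_n) :
  (forall i, selfadjmx (Y i)) -> selfadjmx (\sum_i (x i)%:C *: Y i).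
Proof.
move=> Ysa; rewrite /selfadjmx adjmx_sum; apply: eq_bigr => i _.
by rewrite adjmxZ conj_realC Ysa.
Qed.

Definition hform n (u v : 'cV[C]_n) (M : 'M[C]_n) : C := (adjmx u *m M *m v) 0 0.

Definition qform n (u : 'cV[C]_n) (M : 'M[C]_n) : R := complex.Re (hform u u M).

Lemma hform_col m n p (U : 'M[C]_(n, m)) (W : 'M[C]_(n, p)) M j l :
  (adjmx U *m M *m W) j l = hform (col j U) (col l W) M.
Proof.
rewrite /hform !mxE; apply: eq_bigr => k _; rewrite !mxE; congr (_ * _).
by apply: eq_bigr => i _; rewrite !mxE.
Qed.

Lemma hformD n (u v : 'cV[C]_n) M1 M2 : hform u v (M1 + M2) = hform u v M1 + hform u v M2.
Proof. by rewrite /hform mulmxDr mulmxDl mxE. Qed.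

Lemma hformB n (u v : 'cV[C]_n) M1 M2 : hform u v (M1 - M2) = hform u v M1 - hform u v M2.
Proof. by rewrite /hform mulmxBr mulmxBl mxE [in X in _ + X]mxE. Qed.

Lemma hformZ n (u v : 'cV[C]_n) c M : hform u v (c *: M) = c * hform u v M.
Proof. by rewrite /hform -scalemxAr -scalemxAl mxE. Qed.

Lemma hform_sum n (u v : 'cV[C]_n) I (r : seq I) (P : pred I) (F : I -> 'M[C]_n) :
  hform u v (\sum_(i <- r | P i) F i) = \sum_(i <- r | P i) hform u v (F i).
Proof. by rewrite /hform mulmx_sumr mulmx_suml summxE. Qed.

Lemma conj_hform n (u v : 'cV[C]_n) M : (hform u v M)^* = hform v u (adjmx M).
Proof.
rewrite /hform; have -> : adjmx v *m adjmx M *m u = adjmx (adjmx u *m M *m v).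
  by rewrite !adjmxM adjmxK mulmxA.
by rewrite [in RHS]mxE [in RHS]mxE.
Qed.

Lemma hform_selfadj n (u : 'cV[C]_n) M : selfadjmx M -> hform u u M = (qform u M)%:C.
Proof.
move=> Msa; have /CrealP : (hform u u M)^* = hform u u M by rewrite conj_hform Msa.
by rewrite /qform; case: (hform u u M) => a b; rewrite complex_real => /eqP ->.
Qed.

Lemma psdmx_qform_ge0 n (M : 'M[C]_n) u : psdmx M -> 0 <= qform u M.
Proof. by case=> _ /(_ u); rewrite lecE => /andP[]. Qed.

Lemma qform_ge0_psdmx n (M : 'M[C]_n) :
  selfadjmx M -> (forall u, 0 <= qform u M) -> psdmx M.
Proof.
by move=> Msa qM_ge0; split=> // u; rewrite -/(hform u u M) (hform_selfadj u Msa) ler0c.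
Qed.

Lemma qformD n (u : 'cV[C]_n) M1 M2 : qform u (M1 + M2) = qform u M1 + qform u M2.
Proof. by rewrite /qform hformD raddfD. Qed.

Lemma qformB n (u : 'cV[C]_n) M1 M2 : qform u (M1 - M2) = qform u M1 - qform u M2.
Proof. by rewrite /qform hformB raddfB. Qed.

Lemma ReD (a b : C) : complex.Re (a + b) = complex.Re a + complex.Re b.
Proof. exact: raddfD. Qed.

Lemma ReB (a b : C) : complex.Re (a - b) = complex.Re a - complex.Re b.
Proof. exact: raddfB. Qed.

Lemma Re_sum I (r : seq I) (P : pred I) (F : I -> C) :
  complex.Re (\sum_(i <- r | P i) F i) = \sum_(i <- r | P i) complex.Re (F i).
Proof. exact: raddf_sum. Qed.

Lemma Im_sum I (r : seq I) (P : pred I) (F : I -> C) :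
  complex.Im (\sum_(i <- r | P i) F i) = \sum_(i <- r | P i) complex.Im (F i).
Proof. exact: raddf_sum. Qed.

Lemma Im_realCM (x : R) (z : C) : complex.Im (x%:C * z) = x * complex.Im z.
Proof. by case: z => a b /=; rewrite mul0r addr0. Qed.

Lemma complex_eq0 (z : C) : complex.Re z = 0 -> complex.Im z = 0 -> z = 0.
Proof. by case: z => a b /= -> ->. Qed.

Lemma Re_realCM (x : R) (z : C) : complex.Re (x%:C * z) = x * complex.Re z.
Proof. by case: z => a b /=; rewrite mul0r subr0. Qed.

Lemma qformZ n (u : 'cV[C]_n) (c : R) M : qform u (c%:C *: M) = c * qform u M.
Proof. by rewrite /qform hformZ Re_realCM. Qed.

Lemma qform_sum n (u : 'cV[C]_n) I (r : seq I) (P : pred I) (F : I -> 'M[C]_n) :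
  qform u (\sum_(i <- r | P i) F i) = \sum_(i <- r | P i) qform u (F i).
Proof. by rewrite /qform hform_sum raddf_sum. Qed.

Local Notation normc := (@Normc.normc R).

Lemma normc_ge0 (z : C) : 0 <= normc z.
Proof. by case: z => a b; apply: sqrtr_ge0. Qed.

Lemma normc_ge_absRe (z : C) : `|complex.Re z| <= normc z.
Proof. by case: z => a b /=; rewrite -sqrtr_sqr ler_wsqrtr // lerDl sqr_ge0. Qed.

Lemma normcJ (z : C) : normc z^* = normc z.
Proof. by case: z => a b; rewrite /= sqrrN. Qed.

Lemma normc_sum I (r : seq I) (P : pred I) (F : I -> C) :
  normc (\sum_(i <- r | P i) F i) <= \sum_(i <- r | P i) normc (F i).
Proof.
elim: r => [|a r IH]; rewrite ?big_nil ?big_cons ?Normc.normc0 //.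
by case: (P a) => //; apply: le_trans (le_normcD _ _) _; rewrite lerD2l.
Qed.

Lemma qform1E n (u : 'cV[C]_n) : qform u 1%:M = \sum_k normc (u k 0) ^+ 2.
Proof.
rewrite /qform /hform mulmx1 mxE raddf_sum; apply: eq_bigr => k _; rewrite !mxE.
by case: (u k 0) => a b /=; rewrite sqr_sqrtr ?addr_ge0 ?sqr_ge0 // !expr2; lra.
Qed.

Lemma qform1_ge0 n (u : 'cV[C]_n) : 0 <= qform u 1%:M.
Proof. by rewrite qform1E; apply: sumr_ge0 => k _; apply: sqr_ge0. Qed.

Lemma qform_bounded n (G : 'M[C]_n) :
  exists2 c : R, 0 <= c & forall u, `|qform u G| <= c * qform u 1%:M.
Proof.
exists (\sum_j \sum_i normc (G i j)).
  by do 2!(apply: sumr_ge0 => ? _); apply: normc_ge0.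
move=> u; have u_le i j : normc (u i 0) * normc (u j 0) <= qform u 1%:M.
  have sq_le k : normc (u k 0) ^+ 2 <= qform u 1%:M.
    rewrite qform1E (bigD1 k) //= lerDl.
    by apply: sumr_ge0 => ? _; apply: sqr_ge0.
  have := sq_le i; have := sq_le j; have := sqr_ge0 (normc (u i 0) - normc (u j 0)).
  nra.
apply: le_trans (normc_ge_absRe _) _.
rewrite /hform mxE; apply: le_trans (normc_sum _ _ _) _.
rewrite mulr_suml; apply: ler_sum => j _; rewrite mxE Normc.normcM.
apply: le_trans (ler_wpM2r (normc_ge0 _) (normc_sum _ _ _)) _.
rewrite !mulr_suml; apply: ler_sum => i _; rewrite !mxE Normc.normcM normcJ.
have := u_le i j; have := normc_ge0 (G i j); have := normc_ge0 (u i 0).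
have := normc_ge0 (u j 0); nra.
Qed.

Lemma hform_expand n (u v : 'cV[C]_n) c M :
  hform (u + c *: v) (u + c *: v) M
    = hform u u M + c * hform u v M + c^* * hform v u M + c^* * c * hform v v M.
Proof.
rewrite /hform adjmxD adjmxZ !mulmxDl !mulmxDr -!scalemxAl -!scalemxAr !mxE.
ring.
Qed.

Lemma qform_expand n (u v : 'cV[C]_n) (c : R) M :
  qform (u + c%:C *: v) M
    = qform u M + c * complex.Re (hform u v M + hform v u M) + c ^+ 2 * qform v M.
Proof.
rewrite /qform hform_expand conj_realC -mulrA !ReD !Re_realCM.
by rewrite mulrDr expr2 mulrA addrA.
Qed.

Lemma hform_polarize n (u v : 'cV[C]_n) M : selfadjmx M ->
  (forall c, hform (u + c *: v) (u + c *: v) M = 0) ->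
  hform u u M = 0 -> hform v v M = 0 -> hform u v M = 0.
Proof.
move=> Msa uv0 u0 v0; have vu := conj_hform u v M; rewrite Msa in vu.
have := uv0 1; have := uv0 'i; rewrite !hform_expand u0 v0 -vu rmorph1 conjCi.
rewrite !(mulr0, addr0, add0r, mul1r) mulNr -mulrBr => /eqP.
rewrite mulf_eq0 (negPf (neq0Ci C)) subr_eq0 /= => /eqP <- /eqP.
by rewrite -mulr2n mulrn_eq0 /= => /eqP.
Qed.

Lemma tens11 (M1 M2 : 'M[C]_1) : (M1 *t M2) 0 0 = M1 0 0 * M2 0 0.
Proof. by rewrite mxE; case: (mxtens_unindex _) => a b; rewrite (ord1 a) (ord1 b). Qed.

Lemma hform_tens m n (u1 v1 : 'cV[C]_m) (u2 v2 : 'cV[C]_n) M1 M2 :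
  hform (u1 *t u2) (v1 *t v2) (M1 *t M2) = hform u1 v1 M1 * hform u2 v2 M2.
Proof.
rewrite /hform [adjmx _](adjmx_tens u1 u2) (tensmx_mul (adjmx u1) (adjmx u2) M1 M2).
by rewrite (tensmx_mul (adjmx u1 *m M1) (adjmx u2 *m M2) v1 v2) tens11.
Qed.

Lemma hform_tens1 m n (u1 v1 : 'cV[C]_m) (u2 v2 : 'cV[C]_n) :
  hform (u1 *t u2) (v1 *t v2) 1%:M = hform u1 v1 1%:M * hform u2 v2 1%:M.
Proof.
rewrite /hform !mulmx1 [adjmx _](adjmx_tens u1 u2).
by rewrite (tensmx_mul (adjmx u1) (adjmx u2) v1 v2) tens11.
Qed.

Lemma selfadjmx_sandwich n (N L : 'M[C]_n) : selfadjmx N -> selfadjmx L ->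
  (forall v : 'cV[C]_n, N *m v = 0 -> L *m v = 0) -> exists G : 'M[C]_n, L = N *m G *m N.
Proof.
move=> Nsa Lsa kerNL.
have LN : (L <= N)%MS.
  rewrite submxE; apply/eqP/matrixP => i j; rewrite [RHS]mxE.
  have : N *m col j (cokermx N) = 0 by rewrite colE mulmxA mulmx_coker mul0mx.
  move/kerNL; rewrite colE mulmxA -colE => /(congr1 (fun v : 'cV[C]_n => v i 0)).
  by rewrite !mxE.
set B := L *m pinvmx N.
have LNB : L = N *m adjmx B by rewrite -[in LHS]Lsa -[in LHS](mulmxKpV LN) adjmxM Nsa.
by exists (adjmx B *m pinvmx N); rewrite mulmxA -LNB mulmxKpV.
Qed.

Lemma qform_sqr_1sub_le n (A : 'M[C]_n) u : selfadjmx A ->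
  psdmx (1%:M - A) -> psdmx (1%:M + A) ->
  qform u ((1%:M - A) *m (1%:M - A)) <= 2 * qform u (1%:M - A).
Proof.
move=> Asa NA PA; set N := 1%:M - A; set a := N *m u.
have Nsa : selfadjmx N := selfadjmx_1sub Asa.
have NNsa : selfadjmx (N *m N) by rewrite /selfadjmx adjmxM Nsa.
have aE : adjmx a = adjmx u *m N by rewrite /a adjmxM Nsa.
have au : hform a u N = hform u u (N *m N) by rewrite /hform aE !mulmxA.
have ua : hform u a N = hform u u (N *m N) by rewrite /hform /a !mulmxA.
have qa1 : qform a 1%:M = qform u (N *m N) by rewrite /qform /hform aE mulmx1 /a !mulmxA.
have qaN : qform a N <= 2 * qform u (N *m N).
  by have := psdmx_qform_ge0 a PA; rewrite qformD -qa1 /N qformB; lra.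
have := psdmx_qform_ge0 (a + (-2)%:C *: u) NA.
rewrite -/N qform_expand au ua ReD -/(qform u (N *m N)); lra.
Qed.

Lemma psdmx1_ge0 (M : 'M[C]_1) : psdmx M -> 0 <= complex.Re (M 0 0).
Proof.
move/(psdmx_qform_ge0 (const_mx 1)); rewrite /qform /hform !mxE big_ord1 !mxE big_ord1.
by rewrite !mxE rmorph1 mul1r mulr1 (ord1 (_ : 'I_1)).
Qed.

Lemma psdmx_castmx n n' (e : n = n') (M : 'M[C]_n) : psdmx (castmx (e, e) M) <-> psdmx M.
Proof. by case: n' / e; rewrite castmx_id. Qed.

(* Testing at u (x) u gives sum_i (u^* Y_i u)^2 <= |u|^4; then Cauchy-Schwarz. *)
Lemma psdmx_comb_of_tens_sqr g m (Y : 'I_g -> 'M[C]_m) (x : 'I_g -> R) :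
  (forall i, selfadjmx (Y i)) -> psdmx (1%:M - \sum_i (Y i *t Y i)) ->
  \sum_i x i ^+ 2 <= 1 -> psdmx (1%:M - \sum_i (x i)%:C *: Y i).
Proof.
move=> Ysa YY x_ball; apply: qform_ge0_psdmx => [|u].
  exact/selfadjmx_1sub/selfadjmx_lincomb.
rewrite qformB qform_sum subr_ge0; under eq_bigr do rewrite qformZ.
apply: sum_mul_le_of_sumsq_le x_ball _; first exact: qform1_ge0.
have := psdmx_qform_ge0 (u *t u) YY; rewrite qformB qform_sum subr_ge0.
congr (_ <= _).
- apply: eq_bigr => i _.
  by rewrite /qform hform_tens (hform_selfadj u (Ysa i)) -rmorphM expr2.
- by rewrite /qform hform_tens1 (hform_selfadj u (adjmx1 _)) -rmorphM expr2.
Qed.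

End HermitianForms.

Section UnitBall.
Variable R : rcfType.
Local Notation C := R[i].
Variables (g d : nat) (A : 'I_g -> 'M[C]_d).
Hypothesis A_selfadj : forall i, selfadjmx (A i).

Definition pencil (x : 'I_g -> R) : 'M[C]_d := \sum_i (x i)%:C *: A i.

Lemma pencil_selfadj x : selfadjmx (pencil x).
Proof. exact: selfadjmx_lincomb. Qed.

Lemma pencil_lin a b x y :
  pencil (fun i => a * x i + b * y i) = a%:C *: pencil x + b%:C *: pencil y.
Proof.
rewrite /pencil !scaler_sumr -big_split /=; apply: eq_bigr => i _.
by rewrite rmorphD !rmorphM /= scalerDl !scalerA.
Qed.

Lemma pencil_unitv j : pencil (unitv R j) = A j.
Proof.
rewrite /pencil (bigD1 j) //= big1 ?addr0 /unitv ?eqxx ?rmorph1 ?scale1r //.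
by move=> i /negPf ->; rewrite rmorph0 scale0r.
Qed.

Lemma pencilN x : pencil (fun i => - x i) = - pencil x.
Proof. by rewrite /pencil -sumrN; apply: eq_bigr => i _; rewrite rmorphN scaleNr. Qed.

Variable i0 : 'I_g.
Hypothesis ball_sub : forall x, \sum_i x i ^+ 2 <= 1 -> LMIdom1 A x.

Definition slack : 'M[C]_d := 1%:M - A i0.

Lemma slack_selfadj : selfadjmx slack.
Proof. exact: selfadjmx_1sub. Qed.

Lemma psdmx_slack : psdmx slack.
Proof.
rewrite /slack -pencil_unitv; apply: ball_sub.
by under eq_bigr do rewrite expr2; rewrite sum_unitvM /unitv eqxx.
Qed.

Lemma psdmx_1addA : psdmx (1%:M + A i0).
Proof.
rewrite -[A i0]opprK -pencil_unitv -pencilN; apply: ball_sub.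
by under eq_bigr do rewrite sqrrN expr2; rewrite sum_unitvM /unitv eqxx.
Qed.

(* Shrinking [unitv R i0 + s y] back into the ball costs O(s^2), while the
   pencil moves linearly in s. *)
Lemma qform_tangent_le (v : 'cV[C]_d) y s : A i0 *m v = v -> y i0 = 0 ->
  s * qform v (pencil y) <= s ^+ 2 * ((\sum_i y i ^+ 2) * qform v 1%:M).
Proof.
move=> Av yi0; set S := \sum_i y i ^+ 2; set V := qform v 1%:M.
set a := qform v (pencil y).
have S_ge0 : 0 <= S by apply: sumr_ge0 => i _; apply: sqr_ge0.
have V_ge0 : 0 <= V by apply: qform1_ge0.
have qA : qform v (A i0) = V by rewrite /V /qform /hform -mulmxA Av mulmx1.
set D := 1 + s ^+ 2 * S; have D_ge1 : 1 <= D by rewrite lerDl mulr_ge0 ?sqr_ge0.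
have D_gt0 : 0 < D by apply: lt_le_trans D_ge1.
set w := D^-1; have wD : w * D = 1 by rewrite mulVf ?gt_eqF.
have w_ge0 : 0 <= w by rewrite invr_ge0 ltW.
pose z i := w * unitv R i0 i + w * s * y i.
have z_ball : \sum_i z i ^+ 2 <= 1.
  have -> : \sum_i z i ^+ 2 = w ^+ 2 * \sum_i (unitv R i0 i + s * y i) ^+ 2.
    by rewrite mulr_sumr; apply: eq_bigr => i _; rewrite /z -mulrA -mulrDr exprMn.
  by rewrite sumsq_unitv_add // -/S -/D; nra.
have := psdmx_qform_ge0 v (ball_sub z_ball).
rewrite -/(pencil z) pencil_lin qformB qformD !qformZ pencil_unitv qA -/V -/a => h.
have : D * (V - (w * V + w * s * a)) = D * V - V - s * a.
  by rewrite mulrBr mulrDr !mulrA (mulrC D w) wD; ring.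
have : s ^+ 2 * (S * V) = D * V - V by rewrite /D; ring.
have := mulr_ge0 (ltW D_gt0) h; lra.
Qed.

Lemma qform_tangent_fixed (v : 'cV[C]_d) y : A i0 *m v = v -> y i0 = 0 ->
  qform v (pencil y) = 0.
Proof. by move=> Av yi0; apply: linear_le_quadratic_eq0 => s; apply: qform_tangent_le. Qed.

Lemma hform_tangent_ker (v w : 'cV[C]_d) y :
  slack *m v = 0 -> slack *m w = 0 -> y i0 = 0 -> hform v w (pencil y) = 0.
Proof.
have fixed u : slack *m u = 0 -> A i0 *m u = u.
  by rewrite /slack mulmxBl mul1mx => /eqP; rewrite subr_eq0 => /eqP <-.
have q0 u : slack *m u = 0 -> y i0 = 0 -> hform u u (pencil y) = 0.
  by move=> Nu yi0; rewrite (hform_selfadj _ (pencil_selfadj y)) qform_tangent_fixed ?fixed.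
move=> Nv Nw yi0; apply: hform_polarize (pencil_selfadj y) _ (q0 _ Nv yi0) (q0 _ Nw yi0).
by move=> c; apply: q0 => //; rewrite mulmxDr -scalemxAr Nv Nw scaler0 addr0.
Qed.

(* [kermx] is a left kernel: the rows of [ker_basis] are transposed kernel
   vectors of [slack]. *)
Definition ker_basis := row_base (kermx slack^T).
Definition ker_cobasis := row_base ((adjmx ker_basis^T)^C)%MS.

Lemma slack_ker_basis (j : 'I_(\rank (kermx slack^T))) : slack *m (row j ker_basis)^T = 0.
Proof.
have /sub_kermxP Nj : (row j ker_basis <= kermx slack^T)%MS.
  by apply: submx_trans (row_sub j ker_basis) _; rewrite /ker_basis eq_row_base.
by apply: trmx_inj; rewrite trmx_mul trmxK Nj trmx0.
Qed.

Lemma pencil_ker_slack y : y i0 = 0 -> ker_cobasis *m pencil y *m ker_basis^T = 0 ->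
  forall v : 'cV[C]_d, slack *m v = 0 -> pencil y *m v = 0.
Proof.
move=> yi0 coker0.
have ker0 : adjmx ker_basis^T *m pencil y *m ker_basis^T = 0.
  apply/matrixP => j l; rewrite hform_col -!tr_row mxE.
  exact: hform_tangent_ker (slack_ker_basis j) (slack_ker_basis l) yi0.
have Lker : pencil y *m ker_basis^T = 0.
  have : (1%:M <= adjmx ker_basis^T + ker_cobasis)%MS.
    rewrite submx_full // /row_full (adds_eqmx (eqmx_refl _) (eq_row_base _)).
    exact: addsmx_compl_full.
  case/sub_addsmxP => -[u1 u2] /= e1; rewrite -[pencil y *m _]mul1mx e1.
  have -> : (u1 *m adjmx ker_basis^T + u2 *m ker_cobasis) *m (pencil y *m ker_basis^T)
      = u1 *m (adjmx ker_basis^T *m pencil y *m ker_basis^T)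
        + u2 *m (ker_cobasis *m pencil y *m ker_basis^T) by rewrite mulmxDl !mulmxA.
  by rewrite ker0 coker0 !mulmx0 addr0.
move=> v Nv; have : (v^T <= ker_basis)%MS.
  by rewrite /ker_basis eq_row_base; apply/sub_kermxP; rewrite -trmx_mul Nv trmx0.
by case/submxP => c vc; rewrite -[v]trmxK vc trmx_mul mulmxA Lker mul0mx.
Qed.

Hypothesis g_large : forall k, (k <= d)%N -> (2 * (k * (d - k)) + 1 < g)%N.

(* The real and imaginary parts of the (d - k) x k block, together with
   y i0 = 0, are 2 k (d - k) + 1 < g linear conditions on y. *)
Lemma exists_tangent_offdiag0 : exists2 y : 'I_g -> R,
  exists j, y j != 0 & y i0 = 0 /\ ker_cobasis *m pencil y *m ker_basis^T = 0.
Proof.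
set k := \rank (kermx slack^T); set r := \rank (adjmx ker_basis^T)^C.
pose entry i j l := (ker_cobasis *m A i *m ker_basis^T) j l.
pose f (J : option ('I_r * 'I_k * bool)) i : R := if J is Some (j, l, b)
  then (if b then complex.Re (entry i j l) else complex.Im (entry i j l))
  else unitv R i0 i.
have card_lt : (#|{: option ('I_r * 'I_k * bool)}| < g)%N.
  rewrite card_option !card_prod !card_ord card_bool.
  have -> : r = (d - k)%N.
    rewrite /r mxrank_compl /adjmx mxrank_tr mxrank_map mxrank_tr.
    by rewrite /ker_basis eq_row_base.
  by have := g_large (rank_leq_row (kermx slack^T)); rewrite -/k; lia.
have [y y_nz y_orth] := exists_nonzero_common_root f card_lt.
exists y => //; split.
  by have := y_orth None; under eq_bigr do rewrite mulrC; rewrite sum_unitvM.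
apply/matrixP => j l; rewrite [RHS]mxE.
have -> : (ker_cobasis *m pencil y *m ker_basis^T) j l = \sum_i (y i)%:C * entry i j l.
  rewrite /pencil mulmx_sumr mulmx_suml summxE; apply: eq_bigr => i _.
  by rewrite -scalemxAr -scalemxAl mxE.
apply: complex_eq0; [rewrite Re_sum -[RHS](y_orth (Some (j, l, true))) |
  rewrite Im_sum -[RHS](y_orth (Some (j, l, false)))].
- by apply: eq_bigr => i _; rewrite Re_realCM.
- by apply: eq_bigr => i _; rewrite Im_realCM.
Qed.

Lemma qform_sandwich_le (G : 'M[C]_d) : exists2 c : R, 0 <= c &
  forall w, `|qform w (slack *m G *m slack)| <= c * qform w slack.
Proof.
have [c c_ge0 Gc] := qform_bounded G; exists (2 * c) => [|w]; first by rewrite mulr_ge0.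
have -> : qform w (slack *m G *m slack) = qform (slack *m w) G.
  by rewrite /qform /hform adjmxM slack_selfadj !mulmxA.
apply: le_trans (Gc _) _.
have -> : qform (slack *m w) 1%:M = qform w (slack *m slack).
  by rewrite /qform /hform adjmxM slack_selfadj mulmx1 !mulmxA.
have := qform_sqr_1sub_le w (A_selfadj i0) psdmx_slack psdmx_1addA.
have := psdmx_qform_ge0 w psdmx_slack; rewrite -/slack; nra.
Qed.

Hypothesis LMIdom1_sub_ball : forall x, LMIdom1 A x -> \sum_i x i ^+ 2 <= 1.

Lemma unit_ball_absurd : False.
Proof.
have [y [j yj] [yi0 coker0]] := exists_tangent_offdiag0.
have [G LG] := selfadjmx_sandwich slack_selfadj (pencil_selfadj y) (pencil_ker_slack yi0 coker0).
have [c c_ge0 Ly_le] := qform_sandwich_le G; rewrite -LG in Ly_le.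
set s := (c + 1)^-1; have s_gt0 : 0 < s by rewrite invr_gt0; lra.
have s_c : s * (c + 1) = 1 by rewrite mulVf // gt_eqF //; lra.
pose z i := 1 * unitv R i0 i + s * y i.
have : LMIdom1 A z.
  apply: qform_ge0_psdmx => [|w]; first exact/selfadjmx_1sub/pencil_selfadj.
  rewrite -/(pencil z) pencil_lin rmorph1 scale1r pencil_unitv opprD addrA -/slack.
  rewrite qformB qformZ; have := le_trans (ler_norm _) (Ly_le w).
  have := psdmx_qform_ge0 w psdmx_slack; rewrite -/slack; nra.
move/LMIdom1_sub_ball; rewrite /z; under eq_bigr do rewrite mul1r.
rewrite sumsq_unitv_add //.
by have := mulr_gt0 (exprn_gt0 2 s_gt0) (sumsq_gt0 yj); lra.
Qed.

End UnitBall.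

Lemma LMIdom1_neq_unit_ball (R : rcfType) g d (A : 'I_g -> 'M[R[i]]_d) :
  (forall i, selfadjmx (A i)) ->
  (forall k, (k <= d)%N -> (2 * (k * (d - k)) + 1 < g)%N) ->
  ~ (forall x, LMIdom1 A x <-> \sum_i x i ^+ 2 <= 1).
Proof.
move=> A_selfadj g_large ball.
have g_gt0 : (0 < g)%N by have := g_large 0%N (leq0n d); lia.
exact: (unit_ball_absurd A_selfadj (Ordinal g_gt0) (fun x => (ball x).2) g_large
  (fun x => (ball x).1)).
Qed.

Lemma polar1_selfdual_unit_ball (R : rcfType) g (K : ('I_g -> R) -> Prop) :
  K = polar1 K -> forall x, K x <-> \sum_i x i ^+ 2 <= 1.
Proof.
move=> K_polar; have K_ball x : K x -> \sum_i x i ^+ 2 <= 1.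
  move=> Kx; have := Kx; rewrite {1}K_polar => /(_ x Kx).
  by under eq_bigr do rewrite -expr2.
move=> x; split=> [|x_ball]; first exact: K_ball.
rewrite K_polar => y Ky; apply: sum_mul_le_of_sumsq_le ler01 x_ball _.
by rewrite expr1n; apply: K_ball.
Qed.

Section FreePolar.
Variable R : rcfType.
Local Notation C := R[i].
Variables (g d : nat) (A : 'I_g -> 'M[C]_d).

Definition scalar_tuple (x : 'I_g -> R) : 'I_g -> 'M[C]_1 := fun i => (x i)%:C%:M.

Lemma scalar_tuple_selfadj x : SMtuple (scalar_tuple x).
Proof. by move=> i; rewrite /selfadjmx adjmx_scalar conj_realC. Qed.

Lemma tens_scalar_tuple n (Y : 'I_g -> 'M[C]_n) x :
  1%:M - \sum_i (Y i *t scalar_tuple x i)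
    = castmx (esym (muln1 n), esym (muln1 n)) (1%:M - \sum_i (x i)%:C *: Y i).
Proof.
under eq_bigr do rewrite tens_mx_scalar.
by case: _ / (esym (muln1 n)); rewrite castmx_id; under eq_bigr do rewrite castmx_id.
Qed.

Lemma LMIdom_scalar_tuple x : LMIdom A (scalar_tuple x) <-> LMIdom1 A x.
Proof.
rewrite /LMIdom tens_scalar_tuple psdmx_castmx.
by split=> [[]//|]; split=> //; apply: scalar_tuple_selfadj.
Qed.

Lemma freepolar_selfdual_unit_ball : LMIdom A = freepolar (LMIdom A) ->
  forall x, LMIdom1 A x <-> \sum_i x i ^+ 2 <= 1.
Proof.
move=> D_polar x; split => [/LMIdom_scalar_tuple Dx | x_ball].
  have := Dx; rewrite {1}D_polar => -[_ /(_ 1%N _ Dx)] /psdmx1_ge0.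
  rewrite !mxE summxE ReB Re_sum eqxx /= subr_ge0.
  by congr (_ <= _); apply: eq_bigr => i _; rewrite tens11 !mxE /= mulr0 subr0 expr2.
apply/LMIdom_scalar_tuple; rewrite D_polar; split=> [|m Y DY].
  exact: scalar_tuple_selfadj.
rewrite tens_scalar_tuple psdmx_castmx.
apply: psdmx_comb_of_tens_sqr x_ball; first exact: DY.1.
by move: (DY); rewrite {1}D_polar => -[_ /(_ m Y DY)].
Qed.

End FreePolar.

Theorem mainTheorem20 (R : realType) (d g : nat) (A : 'I_g -> 'M[R[i]]_d) :
  (3 <= d)%N -> (d ^ 2 - d + 2 <= g)%N -> (g <= d ^ 2 - 1)%N ->
  (forall j, selfadjmx (A j)) ->
  freebounded (LMIdom A) ->
  LMIdom1 A <> polar1 (LMIdom1 A) /\ LMIdom A <> freepolar (LMIdom A).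
Proof.
move=> _ g_ge _ A_selfadj _.
have g_large k : (k <= d)%N -> (2 * (k * (d - k)) + 1 < g)%N.
  move=> k_le; apply: leq_trans g_ge; rewrite -(subnKC k_le).
  move: (d - k)%N => l; nia.
have not_ball := LMIdom1_neq_unit_ball A_selfadj g_large.
split=> selfdual; apply: not_ball.
- exact: polar1_selfdual_unit_ball.
- exact: freepolar_selfdual_unit_ball.
Qed.
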